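(* For every $t=0,1,\dots,T-1$ and every $x\in\mathbb R$, $0\le v^\pi_t(x)-v_t(x)=V_t(x)-V^*_t(x)+\epsilon_t(x)$.
   Context: Model. Fix an integer horizon $T\ge 2$, a discount factor $\alpha\in(0,1]$, and for $t=0,\dots,T-1$: unit ordering costs $c_t\in\mathbb R$, a salvage coefficient $c_T\in\mathbb R$, setup costs $K_t\ge 0$, functions $G_t:\mathbb R\to\mathbb R$, and independent nonnegative random demands $D_0,\dots,D_{T-1}$ with right-continuous distribution functions $F_t$ and finite means; all expectations appearing are assumed finite. Let $\delta(z)=1$ for $z>0$, $\delta(0)=0$. Put $C_t(y)=(c_t-\alpha c_{t+1})y+G_t(y)+\alpha c_{t+1}E[D_t]$. Standing assumptions: (i) each $C_t$ is convex with $C_t(y)\to+\infty$ as $|y|\to\infty$; (ii) $K_t\ge \alpha K_{t+1}$ for $t=0,\dots,T-2$. Optimal costs: $v_T(x)=-c_Tx$ and $v_t(x)=\min_{y\ge x}\{K_t\delta(y-x)+c_t(y-x)+G_t(y)+\alpha E[v_{t+1}(y-D_t)]\}$; $V^*_t(x)=v_t(x)+c_tx$. Grid construction. Fix $\theta>0$, $z_m=m\theta$, $Z_\theta=\{z_m:m\in\mathbb Z\}$, $f_t(n)=F_t(z_{n+1})-F_t(z_n)$ ($n\ge -1$). $C^m_t=\min\{y: C_t(y)=\min_x C_t(x)\}$; with $z_{n_0}<C^m_t\le z_{n_0+1}$, $S^U_t=\min\{z_m\in Z_\theta: z_m\ge C^m_t,\ C_t(z_m)>C_t(z_{n_0})+K_t\}$.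 $s_{T-1}$ is a point with $s_{T-1}\le C^m_{T-1}$, $C_{T-1}(s_{T-1})=C_{T-1}(C^m_{T-1})+K_{T-1}$; $\bar I_{T-1}=s_{T-1}$. For $t=T-2,\dots,0$: $I_t=\max\{z_m\in Z_\theta: z_m<\min(\bar I_{t+1}-\theta,C^m_t)\}$, $\bar I_t=\max\{z_m\in Z_\theta: z_m\le I_t,\ C_t(z_m)>C_t(I_t)+K_t\}+\theta$. $H_{T-1}=C_{T-1}$, $S_{T-1}=C^m_{T-1}$; $V_t(y)=H_t(S_t)+K_t$ for $y<s_t$, $V_t(y)=H_t(y)$ for $y\ge s_t$. For $t=T-2,\dots,0$: $H_t(y)=C_t(y)+\alpha\sum_{n=-1}^\infty V_{t+1}(y-z_n)f_t(n)$; $S_t=\max\{z_m\in Z_\theta: I_t\le z_m\le S^U_t,\ H_t(z_m)=\min\{H_t(z_n):z_n\in Z_\theta, I_t\le z_n\le S^U_t\}\}$; $s_t=S_t$ if $K_t=0$, else $s_t=\min\{z_m\in Z_\theta:\bar I_t\le z_m\le S_t,\ H_t(z_m)\le H_t(S_t)+K_t\}$. Policy cost. $v^\pi_T(x)=-c_Tx$ and, for $t\le T-1$, with $y_t(x)=S_t$ if $x<s_t$ and $y_t(x)=x$ otherwise, $v^\pi_t(x)=K_t\delta(y_t(x)-x)+c_t(y_t(x)-x)+G_t(y_t(x))+\alpha E[v^\pi_{t+1}(y_t(x)-D_t)]$. Error terms. For $t=1,\dots,T-1$, $A_t(x)=E[V_t(x-D_{t-1})]-\sum_{n=-1}^{\infty}V_t(x-z_n)f_{t-1}(n)$.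 $\epsilon_{T-1}\equiv 0$; for $t=0,\dots,T-2$: $\epsilon_t(x)=\alpha A_{t+1}(S_t)+\alpha E[\epsilon_{t+1}(S_t-D_t)]$ if $x<s_t$, and $\epsilon_t(x)=\alpha A_{t+1}(x)+\alpha E[\epsilon_{t+1}(x-D_t)]$ if $x\ge s_t$. *)

From HB Require Import structures.
From mathcomp Require Import all_boot all_order all_algebra.
From mathcomp Require Import all_classical all_reals all_analysis.

Set Implicit Arguments.
Unset Strict Implicit.
Unset Printing Implicit Defensive.

Import Order.TTheory GRing.Theory Num.Theory.
Local Open Scope classical_set_scope.
Local Open Scope ring_scope.

Section Inventory.
Variable R : realType.

Variable T : nat.
Variable alpha : R.
Variable c : nat -> R.                  (* c_0, ..., c_{T-1} unit costs; c_T salvage *)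
Variable K : nat -> R.
Variable G : nat -> R -> R.
Variable mu : nat -> probability R R.

Definition Ex (t : nat) (f : R -> R) : R := fine (\int[mu t]_d (f d)%:E).

Definition Fd (t : nat) (z : R) : R := fine (mu t [set d | d <= z]).

Definition delta (z : R) : R := if 0 < z then 1 else 0.

Definition Cfun (t : nat) (y : R) : R :=
  (c t - alpha * c t.+1) * y + G t y + alpha * c t.+1 * Ex t id.

(* vaux n = v_{T-n} *)
Fixpoint vaux (n : nat) : R -> R :=
  match n with
  | 0 => fun x => - c T * x
  | n'.+1 => fun x =>
      let t := (T - n'.+1)%N in
      inf [set r | exists y, x <= y /\
             r = K t * delta (y - x) + c t * (y - x) + G t y
                 + alpha * Ex t (fun d => vaux n' (y - d))]
  end.

Definition v (t : nat) : R -> R := vaux (T - t).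
Definition Vstar (t : nat) (x : R) : R := v t x + c t * x.

Variable theta : R.
Variable sT1 : R.

Definition zg (m : int) : R := m%:~R * theta.
Definition grid : set R := [set z | exists m : int, z = zg m].

Definition Cm (t : nat) : R :=
  inf [set y | Cfun t y = inf (range (Cfun t))].

Definition zn0 (t : nat) : R := sup [set z | grid z /\ z < Cm t].

Definition SU (t : nat) : R :=
  inf [set z | grid z /\ Cm t <= z /\ Cfun t (zn0 t) + K t < Cfun t z].

(* Ibaraux n = \bar I_{T-1-n} *)
Fixpoint Ibaraux (n : nat) : R :=
  match n with
  | 0 => sT1
  | n'.+1 =>
      let t := (T - 1 - n'.+1)%N in
      let It := sup [set z | grid z /\ z < Num.min (Ibaraux n' - theta) (Cm t)] in
      sup [set z | grid z /\ z <= It /\ Cfun t It + K t < Cfun t z] + theta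
  end.

Definition Ibar (t : nat) : R := Ibaraux (T - 1 - t).
Definition Igrid (t : nat) : R :=
  sup [set z | grid z /\ z < Num.min (Ibar t.+1 - theta) (Cm t)].

(* f_t(n) for n = k - 1 >= -1 (k : nat) : F_t(z_{k}) - F_t(z_{k-1}) *)
Definition fmass (t k : nat) : R := Fd t (zg k%:Z) - Fd t (zg (k%:Z - 1)).

(* sum_{n >= -1} W(y - z_n) f_t(n), reindexed with n = k - 1 *)
Definition dsum (t : nat) (W : R -> R) (y : R) : R :=
  limn (fun N => \sum_(0 <= k < N) (W (y - zg (k%:Z - 1)) * fmass t k)).

Record stage := Stage { stH : R -> R; stS : R; sts : R }.

Definition Vof (Kt : R) (st : stage) (y : R) : R :=
  if y < sts st then stH st (stS st) + Kt else stH st y.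

(* stgaux n = (H_t, S_t, s_t) for t = T-1-n *)
Fixpoint stgaux (n : nat) : stage :=
  match n with
  | 0 => Stage (Cfun (T - 1)) (Cm (T - 1)) sT1
  | n'.+1 =>
      let t := (T - 1 - n'.+1)%N in
      let Vn := Vof (K t.+1) (stgaux n') in
      let H := fun y => Cfun t y + alpha * dsum t Vn y in
      let It := Igrid t in
      let Hmin := inf [set r | exists z, grid z /\ It <= z /\ z <= SU t /\ r = H z] in
      let S := sup [set z | grid z /\ It <= z /\ z <= SU t /\ H z = Hmin] in
      let s := if K t == 0 then S
               else inf [set z | grid z /\ Ibar t <= z /\ z <= S /\ H z <= H S + K t] in
      Stage H S s
  end.

Definition Hf (t : nat) : R -> R := stH (stgaux (T - 1 - t)).
Definition Sp (t : nat) : R := stS (stgaux (T - 1 - t)).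
Definition sp (t : nat) : R := sts (stgaux (T - 1 - t)).
Definition Vf (t : nat) : R -> R := Vof (K t) (stgaux (T - 1 - t)).

Definition ypol (t : nat) (x : R) : R := if x < sp t then Sp t else x.

(* vpiaux n = v^pi_{T-n} *)
Fixpoint vpiaux (n : nat) : R -> R :=
  match n with
  | 0 => fun x => - c T * x
  | n'.+1 => fun x =>
      let t := (T - n'.+1)%N in
      let y := ypol t x in
      K t * delta (y - x) + c t * (y - x) + G t y
      + alpha * Ex t (fun d => vpiaux n' (y - d))
  end.

Definition vpi (t : nat) : R -> R := vpiaux (T - t).

(* A_t(x), t >= 1 *)
Definition Aerr (t : nat) (x : R) : R :=
  Ex t.-1 (fun d => Vf t (x - d)) - dsum t.-1 (Vf t) x.

(* epsaux n = eps_{T-1-n} *)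
Fixpoint epsaux (n : nat) : R -> R :=
  match n with
  | 0 => fun _ => 0
  | n'.+1 => fun x =>
      let t := (T - 1 - n'.+1)%N in
      let y := ypol t x in
      alpha * Aerr t.+1 y + alpha * Ex t (fun d => epsaux n' (y - d))
  end.

Definition eps (t : nat) : R -> R := epsaux (T - 1 - t).

End Inventory.

From HB Require Import structures.
From mathcomp Require Import all_boot all_order all_algebra.
From mathcomp Require Import all_classical all_reals all_analysis.
From mathcomp Require Import ring lra zify.

(* Because C_t is convex and coercive it is
     bounded below; hence so is v_t(x) + c_t x, so the infimum defining v_t is
     a genuine lower bound of the cost of every order-up-to level y >= x, in
     particular of the level y_t(x) chosen by the policy, which is >= x since
     s_t <= S_t.
   - Decomposition:  v^pi_t(x) + c_t x = V_t(x) + eps_t(x).  Writing the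
     one-step cost as  K_t delta(y-x) - c_t x + C_t(y) + alpha E[W(y-D_t)]
     with W z = v^pi_{t+1}(z) + c_{t+1} z, the induction hypothesis turns
     alpha E[W(y-D_t)] into the grid sum of V_{t+1} plus the error terms, and
     K_t delta(y_t(x)-x) + H_t(y_t(x)) = V_t(x) again because s_t <= S_t. *)

Set Implicit Arguments.
Unset Strict Implicit.
Unset Printing Implicit Defensive.

Import Order.TTheory GRing.Theory Num.Theory.
Local Open Scope classical_set_scope.
Local Open Scope ring_scope.

Lemma backward_ind (n : nat) (P : nat -> Prop) :
  P n -> (forall t, (t < n)%N -> P t.+1 -> P t) -> forall t, (t <= n)%N -> P t.
Proof.
move=> Pn step; suff Pk : forall k, P (n - k)%N by move=> t /subKn <-.
elim=> [|k IHk]; first by rewrite subn0.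
have [lt_kn | le_nk] := ltnP k n.
- by apply: step; [lia | have -> : (n - k.+1).+1 = (n - k)%N by lia].
- by have -> : (n - k.+1 = n - k)%N by lia.
Qed.

(* Stage t < n sits one step before stage t.+1 in the "remaining horizon"
   indexing used by the recursive definitions. *)
Lemma horizon_succ (n t : nat) :
  (t < n)%N -> (n - t = (n - t.+1).+1)%N /\ (n - (n - t.+1).+1 = t)%N.
Proof. lia. Qed.

Section Expectation.
Variables (R : realType) (mu : nat -> probability R R) (t : nat).

Lemma ExD (f g : R -> R) :
  (mu t).-integrable setT (fun d => (f d)%:E) ->
  (mu t).-integrable setT (fun d => (g d)%:E) ->
  Ex mu t (fun d => f d + g d) = Ex mu t f + Ex mu t g.
Proof.
move=> if_ ig; rewrite /Ex; under eq_integral do rewrite EFinD.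
by rewrite integralD // fineD //; exact: integrable_fin_num.
Qed.

Lemma ExZ (f : R -> R) (k : R) :
  (mu t).-integrable setT (fun d => (f d)%:E) ->
  Ex mu t (fun d => k * f d) = k * Ex mu t f.
Proof.
move=> if_; rewrite /Ex; under eq_integral do rewrite EFinM.
by rewrite integralZl // fineM //; exact: integrable_fin_num.
Qed.

Lemma Ex_cst (k : R) : Ex mu t (fun _ => k) = k.
Proof. by have := expectation_cst (mu t) k; rewrite unlock /cst /Ex => ->. Qed.

Lemma Ex_le (f g : R -> R) :
  (mu t).-integrable setT (fun d => (f d)%:E) ->
  (mu t).-integrable setT (fun d => (g d)%:E) ->
  (forall d, f d <= g d) -> Ex mu t f <= Ex mu t g.
Proof.
move=> if_ ig fg; apply: fine_le; try exact: integrable_fin_num.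
by apply: le_integral => // d _; rewrite lee_fin.
Qed.

Lemma Ex_shift (k y : R) :
  (mu t).-integrable setT (fun d => d%:E) ->
  (mu t).-integrable setT (fun d => (k * (y - d))%:E) /\
  Ex mu t (fun d => k * (y - d)) = k * (y - Ex mu t id).
Proof.
move=> iD; have affine d : k * (y - d) = k * y + - k * d by ring.
have ia := finite_measure_integrable_cst (mu t) (k * y) measurableT.
have ib := integrableZl measurableT (- k) iD.
split; last by under eq_fun do rewrite affine; rewrite ExD // Ex_cst ExZ //; ring.
have -> : (fun d => (k * (y - d))%:E) = (fun d => (k * y + - k * d)%:E).
  by apply: funext => d; rewrite affine.
exact: (integrableD measurableT ia ib).
Qed.

End Expectation.

Lemma delta_ge0 (R : realType) (z : R) : 0 <= delta z.
Proof. by rewrite /delta; case: ifP. Qed.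

Lemma int_argmin (R : realDomainType) (f : int -> R) (lo hi : int) :
  (lo <= hi)%R -> exists2 m, (lo <= m <= hi)%R &
    forall n, (lo <= n <= hi)%R -> f m <= f n.
Proof.
move=> le_lohi; have [k ->] : exists k : nat, hi = lo + k%:Z.
  by exists `|hi - lo|%N; lia.
elim: k => [|k [m hm hmin]].
  by exists lo => [|n hn]; [lia | have -> : n = lo by lia].
have [le_m | lt_m] := leP (f m) (f (lo + k.+1%:Z)).
- exists m => [|n hn]; first lia.
  have [hn'|->] : (lo <= n <= lo + k%:Z)%R \/ n = lo + k.+1%:Z by lia.
  + exact: hmin.
  + exact: le_m.
- exists (lo + k.+1%:Z) => [|n hn]; first lia.
  have [hn'|->] : (lo <= n <= lo + k%:Z)%R \/ n = lo + k.+1%:Z by lia.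
  + exact: le_trans (ltW lt_m) (hmin _ hn').
  + exact: lexx.
Qed.

Section ConvexCoercive.
Variable R : realFieldType.

Definition convex_fun (f : R -> R) : Prop :=
  forall x y l : R, 0 <= l <= 1 -> f (l * x + (1 - l) * y) <= l * f x + (1 - l) * f y.

Definition coercive (f : R -> R) : Prop :=
  forall M : R, exists N : R, forall y, N < `|y| -> M < f y.

Lemma convex_le_ends (f : R -> R) (A z : R) : convex_fun f -> 0 < A ->
  `|z| <= A -> f z <= Num.max (f A) (f (- A)).
Proof.
move=> cvx A_gt0 zA; have : - A <= z <= A by rewrite -ler_norml.
move=> /andP[zl zr]; set l := (z + A) / (2 * A).
have l0 : 0 <= l by rewrite /l divr_ge0 //; lra.
have l1 : l <= 1 by rewrite /l ler_pdivrMr; lra.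
have -> : z = l * A + (1 - l) * (- A) by rewrite /l; field; lra.
apply: le_trans (cvx _ _ _ _) _; first by rewrite l0 l1.
have := le_max (f A) (f A) (f (- A)); have := le_max (f (- A)) (f A) (f (- A)).
rewrite !lexx orbT /= => hB hA; nra.
Qed.

Lemma convex_coercive_lb (f : R -> R) :
  convex_fun f -> coercive f -> exists m, forall y, m <= f y.
Proof.
move=> cvx coer; have [N hN] := coer (f 0).
set A := `|N| + 1; have A_gt0 : 0 < A by rewrite /A; have := normr_ge0 N; lra.
exists (Num.min (f 0) (2 * f 0 - Num.max (f A) (f (- A)))) => y.
have [Ny | yN] := ltP N `|y|; first by rewrite ge_min (ltW (hN _ Ny)).
have yA : `|- y| <= A by rewrite normrN /A; have := ler_norm N; lra.
have mid := cvx y (- y) (1 / 2) ltac:(apply/andP; split; lra).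
rewrite (_ : 1 / 2 * y + (1 - 1 / 2) * - y = 0) in mid; last by field.
have := convex_le_ends cvx A_gt0 yA.
rewrite ge_min => hmy; apply/orP; right; lra.
Qed.

End ConvexCoercive.

Section Grid.
Variables (R : realType) (theta : R).
Hypothesis theta_gt0 : 0 < theta.

Lemma zg_le (m n : int) : (zg theta m <= zg theta n) = (m <= n).
Proof. by rewrite /zg ler_pM2r // ler_int. Qed.

Lemma zg_lt (m n : int) : (zg theta m < zg theta n) = (m < n).
Proof. by rewrite /zg ltr_pM2r // ltr_int. Qed.

Lemma zgS (m : int) : zg theta (m + 1) = zg theta m + theta.
Proof. by rewrite /zg intrD mulrDl mul1r. Qed.

Lemma zg_le_floor (m : int) (b : R) :
  (zg theta m <= b) = (m <= Num.floor (b / theta)).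
Proof. by rewrite floor_ge_int ler_pdivlMr. Qed.

Lemma grid_below (b : R) : exists m, zg theta m < b.
Proof.
exists (Num.floor ((b - theta) / theta)).
have := floor_le ((b - theta) / theta).
rewrite /zg -(ler_pM2r theta_gt0) divfK ?gt_eqF //.
have := theta_gt0; lra.
Qed.

Lemma grid_above (b : R) : exists m, b < zg theta m.
Proof.
exists (Num.floor (b / theta) + 1); have := floorD1_gt (b / theta).
by rewrite /zg -(ltr_pM2r theta_gt0) divfK ?gt_eqF.
Qed.

(* Grid points are theta apart, so a nonempty bounded set of them contains
   its supremum. *)
Lemma grid_sup_mem (E : set R) : (forall z, E z -> grid theta z) ->
  E !=set0 -> has_ubound E -> E (sup E).
Proof.
move=> Egrid E0 Eub; have Esup : has_sup E by [].
have [e Ee supE] := sup_adherent theta_gt0 Esup.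
suff -> : sup E = e by [].
apply/le_anti; rewrite sup_upper_bound // andbT.
apply: ge_sup => // e' Ee'; have e'_le := sup_upper_bound Esup Ee'.
have [m em] := Egrid _ Ee; have [m' em'] := Egrid _ Ee'.
rewrite em em' in e'_le supE *.
rewrite zg_le -ltzD1 -zg_lt zgS; lra.
Qed.

(* The largest grid point strictly below b (this is how I_t is built). *)
Lemma grid_sup_lt (b : R) :
  grid theta (sup [set z | grid theta z /\ z < b]) /\
  sup [set z | grid theta z /\ z < b] < b.
Proof.
suff : [set z | grid theta z /\ z < b] (sup [set z | grid theta z /\ z < b]).
  by [].
apply: grid_sup_mem; first by move=> z [].
- by have [m ?] := grid_below b; exists (zg theta m); split => //; exists m.
- by exists b => z [_ /ltW].
Qed.

Lemma coercive_grid_below (f : R -> R) (b M : R) : coercive f ->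
  exists2 z, grid theta z /\ z <= b & M < f z.
Proof.
move=> coer; have [N hN] := coer M.
have [m] := grid_below (Num.min b (- `|N|)); rewrite lt_min => /andP[mb mN].
exists (zg theta m); first by split; [exists m | exact: ltW].
apply: hN; rewrite ltr0_norm; have := ler_norm N; have := normr_ge0 N; lra.
Qed.

Lemma coercive_grid_above (f : R -> R) (b M : R) : coercive f ->
  exists2 z, grid theta z /\ b <= z & M < f z.
Proof.
move=> coer; have [N hN] := coer M.
have [m] := grid_above (Num.max b `|N|); rewrite gt_max => /andP[mb mN].
exists (zg theta m); first by split; [exists m | exact: ltW].
apply: hN; rewrite gtr0_norm; have := ler_norm N; have := normr_ge0 N; lra.
Qed.

(* The grid point below I where f first exceeds f(I) + K lies at least one
   grid step below I; this gives \bar I_t <= I_t. *)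
Lemma grid_gap_below (f : R -> R) (I Kt : R) : coercive f -> grid theta I ->
  0 <= Kt -> sup [set z | grid theta z /\ z <= I /\ f I + Kt < f z] + theta <= I.
Proof.
move=> coer [m0 em0] Kt_ge0.
have [] : [set z | grid theta z /\ z <= I /\ f I + Kt < f z]
            (sup [set z | grid theta z /\ z <= I /\ f I + Kt < f z]).
  apply: grid_sup_mem; first by move=> z [].
  - by have [z [gz zI] fz] := coercive_grid_below I (f I + Kt) coer; exists z.
  - by exists I => z [_ []].
move=> [m1 ->] [m1I fm1]; rewrite em0 -zgS zg_le.
have : m1 != m0 by apply/eqP => e; rewrite e -em0 in fm1; lra.
by move: m1I; rewrite em0 zg_le; lia.
Qed.

(* The minimiser of C_t is below the level S^U_t. *)
Lemma le_grid_inf_above (f : R -> R) (b a : R) : coercive f ->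
  b <= inf [set z | grid theta z /\ b <= z /\ a < f z].
Proof.
move=> coer; apply: lb_le_inf; last by move=> z [_ []].
by have [z [gz bz] fz] := coercive_grid_above b a coer; exists z.
Qed.

Lemma grid_argmin_mem (H : R -> R) (I U : R) : grid theta I -> I <= U ->
  let S := sup [set z | grid theta z /\ I <= z /\ z <= U /\
     H z = inf [set r | exists z, grid theta z /\ I <= z /\ z <= U /\ r = H z]] in
  grid theta S /\ I <= S.
Proof.
move=> [m0 em0] IU; set Hmin := inf _ => S.
have m0_le : (m0 <= Num.floor (U / theta))%R by rewrite -zg_le_floor -em0.
have [ms /andP[ms_lo ms_hi] msmin] := int_argmin (fun m => H (zg theta m)) m0_le.
have in_range z : grid theta z -> I <= z -> z <= U ->
    exists2 m, z = zg theta m & (m0 <= m <= Num.floor (U / theta))%R.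
  by move=> [m ->]; rewrite em0 zg_le zg_le_floor => *; exists m => //; lia.
have gms : grid theta (zg theta ms) by exists ms.
have Ims : I <= zg theta ms by rewrite em0 zg_le.
have msU : zg theta ms <= U by rewrite zg_le_floor.
have eHmin : Hmin = H (zg theta ms).
  have lbH : lbound [set r | exists z, grid theta z /\ I <= z /\ z <= U /\ r = H z]
               (H (zg theta ms)).
    move=> r [z [gz [Iz [zU ->]]]].
    by have [m -> ?] := in_range z gz Iz zU; exact: msmin.
  apply/le_anti/andP; split.
    by apply: (ge_inf (ex_intro _ _ lbH)); exists (zg theta ms).
  by apply: lb_le_inf => //; exists (H (zg theta ms)), (zg theta ms).
suff [gS [IS _]] : [set z | grid theta z /\ I <= z /\ z <= U /\ H z = Hmin] S by [].
apply: grid_sup_mem; first by move=> z [].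
- by exists (zg theta ms).
- by exists U => z [_ [_ []]].
Qed.

Lemma reorder_point_le (H : R -> R) (Ib S Kt : R) : grid theta S -> Ib <= S ->
  0 <= Kt ->
  (if Kt == 0 then S
   else inf [set z | grid theta z /\ Ib <= z /\ z <= S /\ H z <= H S + Kt]) <= S.
Proof.
move=> gS IbS Kt_ge0; case: eqP => // _.
apply: ge_inf; first by exists Ib => z [_ []].
by do !split => //; lra.
Qed.

End Grid.

Lemma Vof_policy (R : realType) (Kt : R) (st : stage R) (x : R) :
  sts st <= stS st ->
  let y := if x < sts st then stS st else x in
  Kt * delta (y - x) + stH st y = Vof Kt st x.
Proof.
move=> sS y; rewrite /y /Vof; case: ltP => xs.
- by rewrite /delta subr_gt0 (lt_le_trans xs sS) mulr1 addrC.
- by rewrite subrr /delta ltxx mulr0 add0r.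
Qed.

Section Model.
Variables (R : realType) (T : nat) (alpha : R) (c K : nat -> R)
  (G : nat -> R -> R) (mu : nat -> probability R R) (theta sT1 : R).

Local Notation C := (Cfun alpha c G mu).
Local Notation vopt := (v T alpha c K G mu).
Local Notation vpol := (vpi T alpha c K G mu theta sT1).
Local Notation Vgr := (Vf T alpha c K G mu theta sT1).
Local Notation Hgr := (Hf T alpha c K G mu theta sT1).
Local Notation Sgr := (Sp T alpha c K G mu theta sT1).
Local Notation sgr := (sp T alpha c K G mu theta sT1).
Local Notation ypo := (ypol T alpha c K G mu theta sT1).
Local Notation err := (eps T alpha c K G mu theta sT1).
Local Notation Ibr := (Ibar T alpha c K G mu theta sT1).
Local Notation Igr := (Igrid T alpha c K G mu theta sT1).

Hypothesis alpha_ge0 : 0 <= alpha.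
Hypothesis K_ge0 : forall t, (t < T)%N -> 0 <= K t.
Hypothesis C_convex : forall t, (t < T)%N -> convex_fun (C t).
Hypothesis C_coercive : forall t, (t < T)%N -> coercive (C t).
Hypothesis D_mean : forall t, (t < T)%N -> (mu t).-integrable setT (fun d => d%:E).
Hypothesis v_integrable : forall t, (t < T)%N -> forall y,
  (mu t).-integrable setT (fun d => (vopt t.+1 (y - d))%:E).
Hypothesis vpi_integrable : forall t, (t < T)%N -> forall y,
  (mu t).-integrable setT (fun d => (vpol t.+1 (y - d))%:E).
Hypothesis V_integrable : forall t, (0 < t < T)%N -> forall x,
  (mu t.-1).-integrable setT (fun d => (Vgr t (x - d))%:E).
Hypothesis eps_integrable : forall t, (t.+1 < T)%N -> forall x,
  (mu t).-integrable setT (fun d => (err t.+1 (x - d))%:E).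
Hypothesis theta_gt0 : 0 < theta.
Hypothesis sT1_le : sT1 <= Cm alpha c G mu (T - 1)%N.

Definition order_cost (W : R -> R) (t : nat) (x y : R) : R :=
  K t * delta (y - x) + c t * (y - x) + G t y + alpha * Ex mu t (fun d => W (y - d)).

Lemma v_last (z : R) : vopt T z = - c T * z.
Proof. by rewrite /v subnn. Qed.

Lemma vpi_last (z : R) : vpol T z = - c T * z.
Proof. by rewrite /vpi subnn. Qed.

Lemma v_unfold (t : nat) (x : R) : (t < T)%N ->
  vopt t x = inf [set r | exists y, x <= y /\ r = order_cost (vopt t.+1) t x y].
Proof. by move=> /horizon_succ[e1 e2]; rewrite /v e1 /= e2. Qed.

Lemma vpi_unfold (t : nat) (x : R) : (t < T)%N ->
  vpol t x = order_cost (vpol t.+1) t x (ypo t x).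
Proof. by move=> /horizon_succ[e1 e2]; rewrite /vpi e1 /= e2. Qed.

Lemma H_unfold (t : nat) (y : R) : (t.+1 < T)%N ->
  Hgr t y = C t y + alpha * dsum mu theta t (Vgr t.+1) y.
Proof.
move=> lt_t1T; have /horizon_succ[e1 e2] : (t < T - 1)%N by lia.
by rewrite /Hf e1 /= e2.
Qed.

Lemma eps_unfold (t : nat) (x : R) : (t.+1 < T)%N ->
  err t x = alpha * Aerr T alpha c K G mu theta sT1 t.+1 (ypo t x)
            + alpha * Ex mu t (fun d => err t.+1 (ypo t x - d)).
Proof.
move=> lt_t1T; have /horizon_succ[e1 e2] : (t < T - 1)%N by lia.
by rewrite /eps e1 /= e2.
Qed.

Lemma order_cost_split (W : R -> R) (t : nat) (x y : R) : (t < T)%N ->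
  (mu t).-integrable setT (fun d => (W (y - d))%:E) ->
  order_cost W t x y = K t * delta (y - x) - c t * x + C t y
                       + alpha * Ex mu t (fun d => W (y - d) + c t.+1 * (y - d)).
Proof.
move=> lt_tT iW; have [iS eS] := Ex_shift (c t.+1) y (D_mean lt_tT).
by rewrite ExD // eS /order_cost /Cfun; ring.
Qed.

Lemma s_le_S (t : nat) : (t < T)%N -> sgr t <= Sgr t.
Proof.
move=> lt_tT; have [-> | lt_t1T] : t = (T - 1)%N \/ (t.+1 < T)%N by lia.
  by rewrite /sp /Sp subnn.
have coerC := C_coercive lt_tT.
have [gI] : grid theta (Igr t) /\
             Igr t < Num.min (Ibr t.+1 - theta) (Cm alpha c G mu t).
  exact: grid_sup_lt.
rewrite lt_min => /andP[_ I_lt_Cm].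
have Ib_le_I : Ibr t <= Igr t.
  have /horizon_succ[e1 e2] : (t < T - 1)%N by lia.
  by rewrite /Ibar e1 /= e2; apply: grid_gap_below => //; exact: K_ge0.
have I_le_SU : Igr t <= SU alpha c K G mu theta t.
  exact: le_trans (ltW I_lt_Cm) (le_grid_inf_above _ _ _ coerC).
have /horizon_succ[e1 e2] : (t < T - 1)%N by lia.
rewrite /sp /Sp e1 /= e2.
have [gS IS] := grid_argmin_mem theta_gt0 (fun z => C t z + alpha *
  dsum mu theta t (Vof (K t.+1) (stgaux T alpha c K G mu theta sT1 (T - 1 - t.+1))) z)
  gI I_le_SU.
by apply: reorder_point_le => //; [exact: le_trans IS | exact: K_ge0].
Qed.

Lemma le_ypol (t : nat) (x : R) : (t < T)%N -> x <= ypo t x.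
Proof.
move=> lt_tT; rewrite /ypol; case: ifP => // xs.
exact: ltW (lt_le_trans xs (s_le_S lt_tT)).
Qed.

Lemma order_cost_lb (t : nat) (m : R) : (t < T)%N ->
  (forall z, m <= vopt t.+1 z + c t.+1 * z) ->
  exists L, forall x y, L - c t * x <= order_cost (vopt t.+1) t x y.
Proof.
move=> lt_tT vm.
have [mC mCle] := convex_coercive_lb (C_convex lt_tT) (C_coercive lt_tT).
exists (mC + alpha * m) => x y; rewrite order_cost_split //; last exact: v_integrable.
have [iS _] := Ex_shift (c t.+1) y (D_mean lt_tT).
have Em : m <= Ex mu t (fun d => vopt t.+1 (y - d) + c t.+1 * (y - d)).
  rewrite -[X in X <= _](Ex_cst mu t); apply: Ex_le => //.
    exact: finite_measure_integrable_cst.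
  exact: (integrableD measurableT (v_integrable lt_tT y) iS).
have := ler_wpM2l alpha_ge0 Em.
have : 0 <= K t * delta (y - x) by rewrite mulr_ge0 ?delta_ge0 ?K_ge0.
have := mCle y; lra.
Qed.

Lemma v_lb : forall t, (t <= T)%N -> exists m, forall z, m <= vopt t z + c t * z.
Proof.
apply: backward_ind; first by exists 0 => z; rewrite v_last; lra.
move=> t lt_tT [m vm]; have [L hL] := order_cost_lb lt_tT vm.
exists L => z; rewrite v_unfold // -lerBlDr; apply: lb_le_inf.
- by exists (order_cost (vopt t.+1) t z z), z.
- by move=> r [y [_ ->]].
Qed.

Lemma v_le_order_cost (t : nat) (x y : R) : (t < T)%N -> x <= y ->
  vopt t x <= order_cost (vopt t.+1) t x y.
Proof.
move=> lt_tT xy; have [m vm] := v_lb (t := t.+1) lt_tT.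
have [L hL] := order_cost_lb lt_tT vm.
rewrite v_unfold //; apply: ge_inf; last by exists y.
by exists (L - c t * x) => r [y' [_ ->]].
Qed.

Lemma v_le_vpi : forall t, (t <= T)%N -> forall x, vopt t x <= vpol t x.
Proof.
apply: backward_ind; first by move=> x; rewrite v_last vpi_last.
move=> t lt_tT IH x; rewrite vpi_unfold //.
apply: le_trans (v_le_order_cost lt_tT (le_ypol x lt_tT)) _.
rewrite /order_cost lerD2l ler_wpM2l //.
by apply: Ex_le; [exact: v_integrable | exact: vpi_integrable | move=> d].
Qed.

Lemma V_policy (t : nat) (x : R) : (t < T)%N ->
  Vgr t x = K t * delta (ypo t x - x) + Hgr t (ypo t x).
Proof. by move=> /s_le_S sS; rewrite /Vf /ypol /Hf (Vof_policy _ _ sS). Qed.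

Lemma H_last : Hgr (T - 1)%N = C (T - 1)%N.
Proof. by rewrite /Hf subnn. Qed.

Lemma eps_last (x : R) : err (T - 1)%N x = 0.
Proof. by rewrite /eps subnn. Qed.

Lemma vpi_decomp (t : nat) : (t < T)%N -> forall x,
  vpol t x = Vgr t x - c t * x + err t x.
Proof.
move=> lt_tT; have lt_T1T : (T - 1 < T)%N by lia.
have : (t <= T - 1)%N by lia.
move: t {lt_tT}; apply: backward_ind => [x | t lt_tT1 IH x].
  rewrite vpi_unfold // order_cost_split //; last exact: vpi_integrable.
  rewrite V_policy // H_last eps_last.
  have -> : ((T - 1).+1 = T)%N by lia.
  under eq_fun do rewrite vpi_last mulNr addNr.
  by rewrite Ex_cst; ring.
have lt_tT : (t < T)%N by lia.
have lt_t1T : (t.+1 < T)%N by lia.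
set y := ypo t x.
rewrite vpi_unfold // order_cost_split //; last exact: vpi_integrable.
under eq_fun do rewrite IH addrAC subrK.
rewrite ExD; [|exact: (V_integrable (t := t.+1)) | exact: eps_integrable].
by rewrite V_policy // H_unfold // eps_unfold // /Aerr; ring.
Qed.

End Model.

Theorem theorem4p1 (R : realType) (T : nat) (alpha : R) (c K : nat -> R)
  (G : nat -> R -> R) (mu : nat -> probability R R) (theta sT1 : R)
  (hT : (2 <= T)%N)
  (halpha : 0 < alpha <= 1)
  (hK0 : forall t, (t < T)%N -> 0 <= K t)
  (hK : forall t, (t.+1 < T)%N -> alpha * K t.+1 <= K t)
  (hCconv : forall t, (t < T)%N -> forall x y l : R, 0 <= l <= 1 ->
      Cfun alpha c G mu t (l * x + (1 - l) * y)
      <= l * Cfun alpha c G mu t x + (1 - l) * Cfun alpha c G mu t y)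
  (hCcoer : forall t, (t < T)%N -> forall M : R, exists N : R,
      forall y, N < `|y| -> M < Cfun alpha c G mu t y)
  (hDnonneg : forall t, (t < T)%N -> mu t [set d | d < 0] = 0%E)
  (hDmean : forall t, (t < T)%N -> (mu t).-integrable setT (fun d => d%:E))
  (hEv : forall t, (t < T)%N -> forall y,
      (mu t).-integrable setT (fun d => (v T alpha c K G mu t.+1 (y - d))%:E))
  (hEvpi : forall t, (t < T)%N -> forall y,
      (mu t).-integrable setT
        (fun d => (vpi T alpha c K G mu theta sT1 t.+1 (y - d))%:E))
  (hEV : forall t, (0 < t < T)%N -> forall x,
      (mu t.-1).-integrable setT
        (fun d => (Vf T alpha c K G mu theta sT1 t (x - d))%:E))
  (hEeps : forall t, (t.+1 < T)%N -> forall x,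
      (mu t).-integrable setT
        (fun d => (eps T alpha c K G mu theta sT1 t.+1 (x - d))%:E))
  (htheta : 0 < theta)
  (hsT1 : sT1 <= Cm alpha c G mu (T - 1)%N)
  (hsT1C : Cfun alpha c G mu (T - 1)%N sT1
           = Cfun alpha c G mu (T - 1)%N (Cm alpha c G mu (T - 1)%N) + K (T - 1)%N) :
  forall t, (t < T)%N -> forall x : R,
    0 <= vpi T alpha c K G mu theta sT1 t x - v T alpha c K G mu t x /\
    vpi T alpha c K G mu theta sT1 t x - v T alpha c K G mu t x
    = Vf T alpha c K G mu theta sT1 t x - Vstar T alpha c K G mu t x
      + eps T alpha c K G mu theta sT1 t x.
Proof.
have alpha_ge0 : 0 <= alpha by case/andP: halpha => /ltW.
move=> t lt_tT x; split.
- rewrite subr_ge0.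
  exact: (v_le_vpi alpha_ge0 hK0 hCconv hCcoer hDmean hEv hEvpi htheta hsT1
                   (ltnW lt_tT) x).
- rewrite (vpi_decomp alpha_ge0 hK0 hCcoer hDmean hEvpi hEV hEeps htheta hsT1 lt_tT x).
  by rewrite /Vstar; ring.
Qed.
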